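(* Let $G$ be a simple connected graph with $n$ vertices and $m$ edges, let $k\ge1$ be an integer, let $S_k(G)$ be the $k$-parallel subdivision graph of $G$, and let $N$ be the set of new (subdivision) vertices of $S_k(G)$. Let $i\neq j$ be vertices of $S_k(G)$. Then: (1) If $i,j\in V(G)$, then $\Omega_{ij}(S_k(G))=\frac{2}{k}\Omega_{ij}(G)$. (2) If $i\in N$, $j\in V(G)$ and the neighbours of $i$ in $S_k(G)$ are $s,t$, then $\Omega_{ij}(S_k(G))=\frac{k+2\Omega_{sj}(G)+2\Omega_{tj}(G)-\Omega_{st}(G)}{2k}$. (3) If $i,j\in N$, the neighbours of $i$ are $s,t$ and the neighbours of $j$ are $p,q$, then $\Omega_{ij}(S_k(G))=\frac{2k+\Omega_{sp}(G)+\Omega_{sq}(G)+\Omega_{tp}(G)+\Omega_{tq}(G)-\Omega_{pq}(G)-\Omega_{st}(G)}{2k}$.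
   Context: The $k$-parallel subdivision graph $S_k(G)$ is obtained from $G$ by replacing each edge $uv$ of $G$ by $k$ internally disjoint paths $u-w-v$ of length $2$ (each with its own new middle vertex $w$, whose neighbours are $u$ and $v$). $\Omega_{ab}(H)$ denotes the resistance distance between vertices $a,b$ of a connected graph $H$, i.e. the effective resistance between $a$ and $b$ when each edge of $H$ is a unit resistor ($\Omega_{aa}(H)=0$). *)

From HB Require Import structures.
From mathcomp Require Import all_boot all_order all_algebra.
Set Implicit Arguments. Unset Strict Implicit. Unset Printing Implicit Defensive.
Import Order.TTheory GRing.Theory Num.Theory.
Local Open Scope ring_scope.

Definition simple_graph (T : finType) (e : rel T) : Prop :=
  symmetric e /\ irreflexive e.

Definition connected_graph (T : finType) (e : rel T) : Prop :=
  forall x y : T, connect e x y.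

Definition laplacian (R : fieldType) (T : finType) (e : rel T) : 'M[R]_#|T| :=
  \matrix_(i, j)
    ((if i == j then \sum_(y : T) ((e (enum_val i) y)%:R : R) else 0)
      - ((e (enum_val i) (enum_val j))%:R : R)).

(* Resistance distance Omega_ab: potential v solving Kirchhoff's equations
   v L = e_a - e_b (unit current injected at a, extracted at b), read off as
   v_a - v_b.  For a connected graph any solution gives the same value;
   pinvmx picks one solution. *)
Definition resistance (R : fieldType) (T : finType) (e : rel T) (a b : T) : R :=
  let ia := enum_rank a in
  let ib := enum_rank b in
  let u : 'rV[R]_#|T| := delta_mx 0 ia - delta_mx 0 ib in
  let v := u *m pinvmx (laplacian R e) in
  v 0 ia - v 0 ib.

Definition is_edge (V : finType) (e : rel V) (A : {set V}) : bool :=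
  [exists x, exists y, e x y && (A == [set x; y])].

(* Vertex type of S_k(G): old vertices (inl) and new vertices (inr (uv, r)),
   one new vertex for each edge uv of G and each r < k. *)
Notation sdv_vert V e k := (V + ({A : {set V} | is_edge e A} * 'I_k))%type.

Definition sdv_adj (V : finType) (e : rel V) (k : nat) : rel (sdv_vert V e k) :=
  fun p q =>
    match p, q with
    | inl x, inr (A, _) => x \in val A
    | inr (A, _), inl x => x \in val A
    | _, _ => false
    end.
Arguments sdv_adj {V} e k.
Arguments resistance R {T} e a b.

From HB Require Import structures.
From mathcomp Require Import all_boot all_order all_algebra.
From mathcomp Require Import ring lra zify.
Set Implicit Arguments. Unset Strict Implicit. Unset Printing Implicit Defensive.
Import Order.TTheory GRing.Theory Num.Theory.
Local Open Scope ring_scope.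

(* A potential for a unit current from a to b is a function f with
   Laplacian delta_a - delta_b.  Green's reciprocity shows that f a - f b
   does not depend on the choice of f, so it is the resistance Omega_ab, and
   it also expresses every potential difference through resistances:
   2 (f x - f y) = Omega_xb + Omega_ya - Omega_xa - Omega_yb.  Potentials
   exist on a connected graph because the kernel of its Laplacian consists of
   the constants.
   In S_k(G), extending a function g on V(G) by giving each new vertex the
   mean of g at its two ends makes it harmonic at the new vertices and
   multiplies its Laplacian at the old ones by k/2.  The indicator of a new
   vertex w with ends s, t has Laplacian 2 delta_w - delta_s - delta_t.
   Combining the two gives explicit potentials on S_k(G) for each pair of
   vertices, built from potentials of G, and the three formulas follow. *)

Lemma sumr_delta (R : pzSemiRingType) (T : finType) (F : T -> R) (a : T) :
  \sum_x F x * (x == a)%:R = F a.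
Proof.
rewrite (bigD1 a) //= eqxx mulr1 big1 ?addr0 // => x /negbTE->.
by rewrite mulr0.
Qed.

Lemma sumr_set2 (R : nmodType) (T : finType) (x y : T) (F : T -> R) :
  x != y -> \sum_(z in [set x; y]) F z = F x + F y.
Proof. by move=> xy; rewrite big_setU1 ?big_set1 ?inE. Qed.

Lemma sumr_mem (R : pzSemiRingType) (T : finType) (A : {set T}) (F : T -> R) :
  \sum_x (x \in A)%:R * F x = \sum_(x in A) F x.
Proof. by rewrite [RHS]big_mkcond; apply: eq_bigr => x _; rewrite mulr_natl mulrb. Qed.

Lemma natr_in_set2 (R : pzSemiRingType) (T : finType) (s t x : T) : s != t ->
  (x \in [set s; t])%:R = (x == s)%:R + (x == t)%:R :> R.
Proof.
move=> st; rewrite in_set2; case: (eqVneq x s) => [->|_]; last by rewrite add0r.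
by rewrite (negbTE st) addr0.
Qed.

Section Laplacian.

Variables (R : realFieldType) (T : finType) (e : rel T).

Definition lap (f : T -> R) (x : T) : R := \sum_y (e x y)%:R * (f x - f y).

Definition is_potential (a b : T) (f : T -> R) : Prop :=
  forall x, lap f x = (x == a)%:R - (x == b)%:R.

Lemma eq_lap (f g : T -> R) : f =1 g -> lap f =1 lap g.
Proof. by move=> fg x; apply: eq_bigr => y _; rewrite !fg. Qed.

Lemma lapD (f g : T -> R) x : lap (fun p => f p + g p) x = lap f x + lap g x.
Proof. by rewrite /lap -big_split; apply: eq_bigr => y _ /=; ring. Qed.

Lemma lapZ (c : R) (f : T -> R) x : lap (fun p => c * f p) x = c * lap f x.
Proof. by rewrite /lap mulr_sumr; apply: eq_bigr => y _ /=; ring. Qed.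

Lemma lapN (f : T -> R) x : lap (fun p => - f p) x = - lap f x.
Proof. by rewrite -mulN1r -lapZ; apply: eq_lap => p; rewrite mulN1r. Qed.

Lemma lapB (f g : T -> R) x : lap (fun p => f p - g p) x = lap f x - lap g x.
Proof. by rewrite lapD lapN. Qed.

Lemma lap_delta (w z : T) :
  lap (fun p => (p == w)%:R) z = (z == w)%:R * \sum_y (e z y)%:R - (e z w)%:R.
Proof.
rewrite /lap; under eq_bigr do rewrite mulrBr.
by rewrite sumrB sumr_delta -mulr_suml mulrC.
Qed.

Hypothesis e_sym : symmetric e.

Lemma lap_dirichlet (f g : T -> R) :
  2 * \sum_x g x * lap f x
  = \sum_x \sum_y (e x y)%:R * ((g x - g y) * (f x - f y)).
Proof.
have sum_gx : \sum_x g x * lap f x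
              = \sum_x \sum_y (e x y)%:R * (g x * (f x - f y)).
  by apply: eq_bigr => x _; rewrite mulr_sumr; apply: eq_bigr => y _; ring.
have sum_gy : \sum_x g x * lap f x
              = \sum_x \sum_y (e x y)%:R * (- g y * (f x - f y)).
  rewrite sum_gx exchange_big; apply: eq_bigr => x _; apply: eq_bigr => y _.
  by rewrite e_sym; ring.
rewrite mulr2n mulrDl mul1r {1}sum_gx sum_gy -big_split.
by apply: eq_bigr => x _; rewrite -big_split; apply: eq_bigr => y _ /=; ring.
Qed.

Lemma lap_selfadjoint (f g : T -> R) :
  \sum_x g x * lap f x = \sum_x f x * lap g x.
Proof.
apply: (@mulfI _ 2); first by rewrite pnatr_eq0.
by rewrite !lap_dirichlet; apply: eq_bigr => x _; apply: eq_bigr => y _; ring.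
Qed.

Lemma potential_reciprocity a b c d {f g : T -> R} :
  is_potential a b f -> is_potential c d g -> f c - f d = g a - g b.
Proof.
move=> fP gP; have := lap_selfadjoint f g.
under eq_bigr do rewrite fP mulrBr.
under [X in _ = X -> _]eq_bigr do rewrite gP mulrBr.
by rewrite !sumrB !sumr_delta => ->.
Qed.

Lemma mulmx_laplacianE (w : 'rV[R]_#|T|) j :
  (w *m laplacian R e) 0 j = lap (fun x => w 0 (enum_rank x)) (enum_val j).
Proof.
have sum_enum_val (F : T -> R) : \sum_x F x = \sum_(i < #|T|) F (enum_val i).
  apply: esym; rewrite (reindex (@enum_rank T)) /=; last exact/onW_bij/enum_rank_bij.
  by apply: eq_bigr => x _; rewrite enum_rankK.
rewrite mxE /lap [RHS]sum_enum_val.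
under eq_bigr do rewrite mxE mulrBr.
rewrite sumrB (bigD1 j) //= eqxx [X in _ * _ + X]big1 ?addr0 => [|i /negbTE->];
  last by rewrite mulr0.
rewrite sum_enum_val mulr_sumr -sumrB; apply: eq_bigr => i _.
by rewrite !enum_valK e_sym; ring.
Qed.

Lemma trmx_laplacian : (laplacian R e)^T = laplacian R e.
Proof.
apply/matrixP => i j; rewrite !mxE.
by case: (eqVneq i j) => [->|_] //; rewrite e_sym.
Qed.

Definition current_mx (a b : T) : 'rV[R]_#|T| :=
  delta_mx 0 (enum_rank a) - delta_mx 0 (enum_rank b).

Lemma current_mxE a b x :
  current_mx a b 0 (enum_rank x) = (x == a)%:R - (x == b)%:R.
Proof. by rewrite !mxE !eqxx /= !(inj_eq enum_rank_inj). Qed.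

Lemma potential_mx a b (w : 'rV[R]_#|T|) :
  w *m laplacian R e = current_mx a b -> is_potential a b (fun x => w 0 (enum_rank x)).
Proof.
move=> wL x; have := mulmx_laplacianE w (enum_rank x).
by rewrite wL enum_rankK current_mxE.
Qed.

(* Reciprocity against the pseudo-inverse solution used in the definition of
   [resistance]; no uniqueness of potentials is needed. *)
Lemma resistance_potential a b (f : T -> R) :
  is_potential a b f -> resistance R e a b = f a - f b.
Proof.
move=> fP; pose w := \row_(j < #|T|) f (enum_val j).
have wL : w *m laplacian R e = current_mx a b.
  apply/rowP => j; rewrite mulmx_laplacianE -[in RHS](enum_valK j) current_mxE -(fP _).
  by apply: eq_lap => x; rewrite mxE enum_rankK.
have /mulmxKpV/potential_mx pinvP : (current_mx a b <= laplacian R e)%MS.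
  by rewrite -wL submxMl.
exact/esym/(potential_reciprocity fP pinvP).
Qed.

Hypothesis e_conn : forall x y : T, connect e x y.

Lemma lap_eq0_const (f : T -> R) : lap f =1 (fun=> 0) -> forall x y, f x = f y.
Proof.
move=> f_harm.
have term_ge0 x y : 0 <= (e x y)%:R * ((f x - f y) * (f x - f y)) :> R.
  by rewrite mulr_ge0 ?ler0n // -expr2 sqr_ge0.
have energy0 : \sum_x \sum_y (e x y)%:R * ((f x - f y) * (f x - f y)) = 0 :> R.
  by rewrite -lap_dirichlet big1 ?mulr0 // => x _; rewrite f_harm mulr0.
have f_edge x y : e x y -> f x = f y.
  move=> exy; apply/eqP; rewrite -subr_eq0 -[_ == 0]orbb -mulf_eq0.
  have row0 := psumr_eq0P (fun x _ => sumr_ge0 _ (fun y _ => term_ge0 x y)) energy0.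
  have := psumr_eq0P (fun y _ => term_ge0 x y) (row0 x isT) (i := y) isT.
  by rewrite exy mul1r => ->.
move=> x y; have f_closed : closed e [pred z | f z == f x].
  by move=> u v /f_edge; rewrite !inE => ->.
by have := closed_connect f_closed (e_conn x y); rewrite !inE eqxx => /esym/eqP.
Qed.

Lemma mulmx_laplacian_const : laplacian R e *m (const_mx 1 : 'cV[R]_#|T|) = 0.
Proof.
rewrite -trmx_laplacian -[const_mx 1]trmxK -trmx_mul -[RHS]trmx0; congr (_^T).
apply/rowP => j; rewrite mulmx_laplacianE mxE /lap big1 // => y _.
by rewrite !mxE subrr mulr0.
Qed.

Lemma kermx_laplacian : (kermx (laplacian R e) <= (const_mx 1 : 'rV[R]_#|T|))%MS.
Proof.
apply/row_subP => i; set w := row i _.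
have wL : w *m laplacian R e = 0 by rewrite -row_mul mulmx_ker row0.
have w_harm : lap (fun x => w 0 (enum_rank x)) =1 (fun=> 0).
  by move=> x; rewrite -[x]enum_rankK -mulmx_laplacianE wL mxE.
pose c := w 0 (enum_rank (enum_val i)).
have -> : w = c *: const_mx 1.
  apply/rowP => j; rewrite -[j]enum_valK [RHS]mxE [const_mx _ _ _]mxE mulr1.
  exact: (lap_eq0_const w_harm).
exact/scalemx_sub/submx_refl.
Qed.

Lemma current_sub_laplacian a b : (current_mx a b <= laplacian R e)%MS.
Proof.
set L := laplacian R e; set one : 'cV[R]_#|T| := const_mx 1.
have rank_one : \rank one = 1%N.
  apply/eqP; rewrite eqn_leq rank_leq_col lt0n mxrank_eq0; apply/eqP.
  by move/matrixP/(_ (enum_rank a) 0); rewrite !mxE => /eqP; rewrite oner_eq0.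
have L_sub : (L <= kermx one)%MS by rewrite sub_kermx mulmx_laplacian_const.
have rank_L : (\rank (kermx one) <= \rank L)%N.
  have := leq_trans (mxrankS kermx_laplacian) (rank_leq_row _).
  by rewrite !mxrank_ker rank_one -/L; lia.
have ker_sub : (kermx one <= L)%MS.
  by rewrite -(mxrank_leqif_sup L_sub).2 eqn_leq mxrankS.
apply: submx_trans ker_sub; rewrite sub_kermx /current_mx mulmxBl -!rowE.
by rewrite !row_const subrr.
Qed.

Lemma potential_exists a b : exists f : T -> R, is_potential a b f.
Proof.
by exists (fun x => (current_mx a b *m pinvmx (laplacian R e)) 0 (enum_rank x));
  apply/potential_mx/mulmxKpV/current_sub_laplacian.
Qed.

Lemma resistance_sym a b : resistance R e a b = resistance R e b a.
Proof.
have [f fP] := potential_exists a b.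
rewrite (resistance_potential fP) (@resistance_potential b a (fun x => - f x)).
  by rewrite opprK addrC.
by move=> x; rewrite lapN fP opprB.
Qed.

Lemma potential_resistance_ref a b f x : is_potential a b f ->
  2 * (f x - f b) = resistance R e x b + resistance R e a b - resistance R e x a.
Proof.
move=> fP; have [g gP] := potential_exists x b.
have gfP : is_potential x a (fun p => g p - f p).
  by move=> p; rewrite lapD lapN fP gP; ring.
have := potential_reciprocity fP gP.
rewrite (resistance_potential gfP) (resistance_potential gP) (resistance_potential fP).
lra.
Qed.

Lemma potential_resistance a b f x y : is_potential a b f ->
  2 * (f x - f y) = resistance R e x b + resistance R e y a
                    - resistance R e x a - resistance R e y b.
Proof.
move=> fP; have := potential_resistance_ref x fP.
have := potential_resistance_ref y fP; lra.
Qed.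

End Laplacian.

Section Subdivision.

Variables (R : realFieldType) (V : finType) (e : rel V) (k : nat).
Hypothesis e_simple : simple_graph e.

Local Notation edge := {A : {set V} | is_edge e A}.
Local Notation S := (sdv_adj e k).

Lemma sdv_adj_sym : symmetric S.
Proof. by case=> [x|[A r]] [y|[B s]]. Qed.

Lemma edge_ends (A : edge) : exists x y, [/\ e x y, x != y & val A = [set x; y]].
Proof.
case: A => A /= /existsP[x /existsP[y /andP[exy /eqP->]]].
exists x, y; split=> //; apply: contraTneq exy => ->.
by rewrite e_simple.2.
Qed.

Lemma edge_mem2 (A : edge) x y : x \in val A -> y \in val A -> x != y ->
  val A = [set x; y] /\ e x y.
Proof.
have [u [v [euv _ ->]]] := edge_ends A; rewrite !in_set2.
by case/orP=> /eqP-> /orP[]/eqP->; rewrite ?eqxx // => _; rewrite setUC e_simple.1.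
Qed.

Lemma sum_edges_mem2 x y : x != y ->
  \sum_(A : edge) ((x \in val A) && (y \in val A))%:R = (e x y)%:R :> R.
Proof.
move=> xy; case exy: (e x y); last first.
  by apply: big1 => A _; case: andP => // -[xA yA]; rewrite (edge_mem2 xA yA xy).2 in exy.
have xy_edge : is_edge e [set x; y].
  by apply/existsP; exists x; apply/existsP; exists y; rewrite exy eqxx.
rewrite (bigD1 (Sub [set x; y] xy_edge : edge)) //= !in_set2 !eqxx orbT.
rewrite big1 ?addr0 // => A neA.
case: andP => // -[xA yA]; case/eqP: neA; apply: val_inj.
exact: (edge_mem2 xA yA xy).1.
Qed.

Definition sdv_mean (g : V -> R) (p : sdv_vert V e k) : R :=
  match p with inl x => g x | inr (A, _) => (\sum_(y in val A) g y) / 2 end.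

Lemma lap_sdv_mean_new g A r : lap S (sdv_mean g) (inr (A, r)) = 0.
Proof.
rewrite /lap big_sumType /= [X in _ + X]big1 ?addr0 => [|[B s] _]; last by rewrite mul0r.
have [x [y [_ xy ->]]] := edge_ends A.
by rewrite sumr_mem !sumr_set2 //; field.
Qed.

Lemma edge_mean_diff (A : edge) (g : V -> R) x :
  (x \in val A)%:R * (g x - (\sum_(y in val A) g y) / 2)
  = 2^-1 * \sum_y ((x \in val A) && (y \in val A))%:R * (g x - g y).
Proof.
case: (boolP (x \in val A)) => xA; last by rewrite mul0r big1 ?mulr0 // => y _; rewrite mul0r.
have [u [v [_ uv ->]]] := edge_ends A.
by rewrite mul1r sumr_mem !sumr_set2 //; field.
Qed.

Lemma lap_sdv_mean_old g x : lap S (sdv_mean g) (inl x) = k%:R / 2 * lap e g x.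
Proof.
rewrite /lap big_sumType /= big1 ?add0r => [|y _]; last by rewrite mul0r.
pose H (A : edge) := (x \in val A)%:R * (g x - (\sum_(y in val A) g y) / 2).
rewrite (eq_bigr (fun p => H p.1)) => [|[A r] _ //].
rewrite -(pair_big xpredT xpredT (fun A (_ : 'I_k) => H A)) /=.
under eq_bigr do rewrite sumr_const card_ord -mulr_natl /H edge_mean_diff.
under eq_bigr do rewrite mulrA.
rewrite -mulr_sumr exchange_big; congr (_ * _); apply: eq_bigr => y _.
rewrite -mulr_suml; case: (eqVneq x y) => [->|xy]; first by rewrite !subrr !mulr0.
by rewrite sum_edges_mem2 // mulrC.
Qed.

Lemma sdv_deg_new (i : edge * 'I_k) : \sum_q (S (inr i) q)%:R = 2 :> R.
Proof.
case: i => A r; rewrite big_sumType /= [X in _ + X]big1 ?addr0 => [|[B s] _ //].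
have [x [y [_ xy ->]]] := edge_ends A.
under eq_bigr do rewrite -[(_ \in _)%:R]mulr1.
by rewrite sumr_mem sumr_set2.
Qed.

Definition sdv_delta (i : edge * 'I_k) (p : sdv_vert V e k) : R := (p == inr i)%:R.

Lemma sdv_delta_old i x : sdv_delta i (inl x) = 0.
Proof. by []. Qed.

Lemma sdv_deltaxx i : sdv_delta i (inr i) = 1.
Proof. by rewrite /sdv_delta eqxx. Qed.

Lemma sdv_delta_neq i j : j != i -> sdv_delta i (inr j) = 0.
Proof. by move=> ji; rewrite /sdv_delta (inj_eq inr_inj) (negbTE ji). Qed.

Lemma lap_sdv_delta_old (i : edge * 'I_k) x :
  lap S (sdv_delta i) (inl x) = - (x \in val i.1)%:R.
Proof. by rewrite /sdv_delta lap_delta mul0r sub0r; case: i. Qed.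

Lemma lap_sdv_delta_new (i j : edge * 'I_k) :
  lap S (sdv_delta i) (inr j) = 2 * sdv_delta i (inr j).
Proof.
rewrite /sdv_delta lap_delta sdv_deg_new mulrC.
by case: i j => [A r] [B s]; rewrite subr0.
Qed.

Lemma sdv_adj_new_ends (i : edge * 'I_k) s t :
  (forall x, S (inr i) x = (x == inl s) || (x == inl t)) -> val i.1 = [set s; t].
Proof.
move=> i_adj; apply/setP => y; have := i_adj (inl y).
by case: i {i_adj} => A r /= ->; rewrite in_set2.
Qed.

Lemma sdv_mean_new g (i : edge * 'I_k) s t : s != t -> val i.1 = [set s; t] ->
  sdv_mean g (inr i) = (g s + g t) / 2.
Proof. by case: i => A r st /= ->; rewrite sumr_set2. Qed.

Hypotheses (e_conn : connected_graph e) (k_gt0 : (0 < k)%N).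

Let e_sym : symmetric e := e_simple.1.

Let k_neq0 : k%:R != 0 :> R.
Proof. by rewrite pnatr_eq0 -lt0n. Qed.

Local Notation Om := (resistance R e).

Lemma sdv_resistance_old i j : resistance R S (inl i) (inl j) = 2 / k%:R * Om i j.
Proof.
have [f fP] := potential_exists R e_sym e_conn i j.
have psiP : is_potential S (inl i) (inl j) (sdv_mean (fun y => 2 / k%:R * f y)).
  case=> [x|[A r]]; last by rewrite lap_sdv_mean_new /= subrr.
  by rewrite lap_sdv_mean_old lapZ fP /=; field.
by rewrite (resistance_potential sdv_adj_sym psiP) (resistance_potential e_sym fP) mulrBr.
Qed.

Lemma sdv_resistance_new_old (i : edge * 'I_k) j s t : s != t ->
  (forall x, S (inr i) x = (x == inl s) || (x == inl t)) ->
  resistance R S (inr i) (inl j) = (k%:R + 2 * Om s j + 2 * Om t j - Om s t) / (2 * k%:R).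
Proof.
move=> st /sdv_adj_new_ends i_ends.
have [f1 f1P] := potential_exists R e_sym e_conn s j.
have [f2 f2P] := potential_exists R e_sym e_conn t j.
pose psi p := sdv_mean (fun y => k%:R^-1 * (f1 y + f2 y)) p + 2^-1 * sdv_delta i p.
have psiP : is_potential S (inr i) (inl j) psi.
  case=> [x|[A r]].
    rewrite lapD lapZ lap_sdv_mean_old lapZ lapD f1P f2P lap_sdv_delta_old.
    by rewrite i_ends natr_in_set2 //=; field.
  by rewrite lapD lap_sdv_mean_new lapZ lap_sdv_delta_new add0r mulKf ?pnatr_eq0 // subr0.
rewrite (resistance_potential sdv_adj_sym psiP) /psi (sdv_mean_new _ st i_ends).
rewrite sdv_deltaxx sdv_delta_old /=.
have Osj := resistance_potential e_sym f1P.
have Otj := resistance_potential e_sym f2P.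
have f1t := potential_resistance_ref e_sym e_conn t f1P.
have f2s := potential_resistance_ref e_sym e_conn s f2P.
have Ots := resistance_sym R e_sym e_conn t s.
have -> : k%:R + 2 * Om s j + 2 * Om t j - Om s t
          = k%:R + (f1 s + f2 s + (f1 t + f2 t) - 2 * (f1 j + f2 j)) by lra.
by field.
Qed.

Lemma sdv_resistance_new_new (i j : edge * 'I_k) s t p q :
  i != j -> s != t -> p != q ->
  (forall x, S (inr i) x = (x == inl s) || (x == inl t)) ->
  (forall x, S (inr j) x = (x == inl p) || (x == inl q)) ->
  resistance R S (inr i) (inr j)
  = (2 * k%:R + Om s p + Om s q + Om t p + Om t q - Om p q - Om s t) / (2 * k%:R).
Proof.
move=> ij st pq /sdv_adj_new_ends i_ends /sdv_adj_new_ends j_ends.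
have [f1 f1P] := potential_exists R e_sym e_conn s p.
have [f2 f2P] := potential_exists R e_sym e_conn t q.
pose psi x := sdv_mean (fun y => k%:R^-1 * (f1 y + f2 y)) x
              + 2^-1 * (sdv_delta i x - sdv_delta j x).
have psiP : is_potential S (inr i) (inr j) psi.
  case=> [x|[A r]].
    rewrite lapD lap_sdv_mean_old !lapZ lapB !lap_sdv_delta_old lapD f1P f2P.
    by rewrite i_ends j_ends !natr_in_set2 //=; field.
  rewrite lapD lap_sdv_mean_new lapZ lapB !lap_sdv_delta_new -mulrBr.
  by rewrite add0r mulKf ?pnatr_eq0.
rewrite (resistance_potential sdv_adj_sym psiP) /psi (sdv_mean_new _ st i_ends).
have ji : j != i by rewrite eq_sym.
rewrite (sdv_mean_new _ pq j_ends) !sdv_deltaxx (sdv_delta_neq ij) (sdv_delta_neq ji).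
have Osp := resistance_potential e_sym f1P.
have Otq := resistance_potential e_sym f2P.
have f1tq := potential_resistance e_sym e_conn t q f1P.
have f2sp := potential_resistance e_sym e_conn s p f2P.
have Oqs := resistance_sym R e_sym e_conn q s.
have Ots := resistance_sym R e_sym e_conn t s.
have Oqp := resistance_sym R e_sym e_conn q p.
have Opt := resistance_sym R e_sym e_conn p t.
have -> : 2 * k%:R + Om s p + Om s q + Om t p + Om t q - Om p q - Om s t
  = 2 * k%:R + (f1 s + f2 s + (f1 t + f2 t) - (f1 p + f2 p + (f1 q + f2 q))) by lra.
by field.
Qed.

End Subdivision.

Theorem corollary4p3 (R : realFieldType) (V : finType) (e : rel V) (k : nat) :
  simple_graph e -> connected_graph e -> (0 < k)%N ->
  let Om := resistance R e in
  let OmS := resistance R (sdv_adj e k) in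
  (* (1) both vertices old *)
  (forall i j : V, i != j ->
     OmS (inl i) (inl j) = (2 / k%:R) * Om i j) /\
  (* (2) i new with neighbours s, t; j old *)
  (forall (i : {A : {set V} | is_edge e A} * 'I_k) (j s t : V),
     s != t ->
     (forall x : sdv_vert V e k,
        sdv_adj e k (inr i) x = (x == inl s) || (x == inl t)) ->
     OmS (inr i) (inl j)
       = (k%:R + 2 * Om s j + 2 * Om t j - Om s t) / (2 * k%:R)) /\
  (* (3) i, j new, neighbours s, t of i and p, q of j *)
  (forall (i j : {A : {set V} | is_edge e A} * 'I_k) (s t p q : V),
     i != j -> s != t -> p != q ->
     (forall x : sdv_vert V e k,
        sdv_adj e k (inr i) x = (x == inl s) || (x == inl t)) ->
     (forall x : sdv_vert V e k,
        sdv_adj e k (inr j) x = (x == inl p) || (x == inl q)) ->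
     OmS (inr i) (inr j)
       = (2 * k%:R + Om s p + Om s q + Om t p + Om t q - Om p q - Om s t)
           / (2 * k%:R)).
Proof.
move=> e_simple e_conn k_gt0 Om OmS; split; [|split].
- by move=> i j _; exact: sdv_resistance_old.
- exact: sdv_resistance_new_old.
- exact: sdv_resistance_new_new.
Qed.
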